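(* Let $N\ge2$, $M\geq0$, and let $U$ be the vector space with orthonormal basis $e_0,\dots,e_M$. For $n\ge1$ let $\alpha_n$ act on $U$ by $\alpha_ne_k=e_{k-n}$ if $k-n\geq0$ and $0$ otherwise, and let $\alpha_{-n}=\alpha_n^*$ (so $\alpha_{-n}e_k=e_{k+n}$ if $k+n\le M$, else $0$). Let $\mathfrak{W}=\exp\big(\sum_{n<0,N\nmid n}\alpha_n/n\big)\exp\big(\sum_{n>0,N\nmid n}\alpha_n/n\big)$ acting on $U$. Then for all $0\le k,l\le M$, $\langle e_k\,|\,\mathfrak{W}\,|\,e_l\rangle$ equals the coefficient of $x^ky^l$ in $$f(x,y)=\frac{1}{1-xy}\cdot\frac{1-x}{(1-x^N)^{1/N}}\cdot\frac{(1-y^N)^{1/N}}{1-y}.$$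
   Context: Power series are expanded at $x=y=0$ using the binomial series for $(1-x^N)^{\mp1/N}$. *)

(* Scalars: rat (all quantities involved are rational). *)
From HB Require Import structures.
From mathcomp Require Import all_boot all_order all_algebra.
Set Implicit Arguments. Unset Strict Implicit. Unset Printing Implicit Defensive.
Import Order.TTheory GRing.Theory Num.Theory.
Local Open Scope ring_scope.

(* ---------- Operators on U = span(e_0,...,e_M), as (M+1)x(M+1) matrices ----
   Matrix entry A i j = <e_i | A | e_j>, i.e. column j is the image of e_j. *)

Definition alpha (M n : nat) : 'M[rat]_M.+1 :=
  \matrix_(i, j) (((i + n)%N == j)%:R : rat).

(* alpha_(-n) = adjoint of alpha_n = transpose (real orthonormal basis). *)
Definition alpham (M n : nat) : 'M[rat]_M.+1 := (alpha M n)^T.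

(* sum_{n>0, N does not divide n} alpha_n / n   (alpha_n = 0 for n > M) *)
Definition Splus (N M : nat) : 'M[rat]_M.+1 :=
  \sum_(1 <= n < M.+1 | ~~ (N %| n)%N) (n%:R)^-1 *: alpha M n.

(* sum_{n<0, N does not divide n} alpha_n / n
   = sum_{m>0, N does not divide m} alpha_(-m) / (-m) *)
Definition Sminus (N M : nat) : 'M[rat]_M.+1 :=
  \sum_(1 <= m < M.+1 | ~~ (N %| m)%N) (- (m%:R))^-1 *: alpham M m.

(* Exponential of a matrix A with A^(M+1) = 0 (nilpotent on a space of
   dimension M+1): the exponential series is then the finite sum below. *)
Definition nilexp (M : nat) (A : 'M[rat]_M.+1) : 'M[rat]_M.+1 :=
  \sum_(j < M.+1) (j`!%:R)^-1 *: A ^+ j.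

Definition frakW (N M : nat) : 'M[rat]_M.+1 :=
  nilexp (Sminus N M) *m nilexp (Splus N M).

Definition gbinom (a : rat) (j : nat) : rat :=
  (\prod_(i < j) (a - i%:R)) / (j`!%:R).

Definition ser1 := nat -> rat.

(* (1 - x^N)^a = sum_j binom(a,j) (-1)^j x^(N j)   (binomial series) *)
Definition binser (N : nat) (a : rat) : ser1 :=
  fun m => if (N %| m)%N then gbinom a (m %/ N) * (-1) ^+ (m %/ N) else 0.

Definition mul1 (F G : ser1) : ser1 :=
  fun m => \sum_(i < m.+1) F i * G (m - i)%N.

Definition one_minus_x : ser1 := fun m => if m == 0%N then 1 else if m == 1%N then -1 else 0.
Definition geom1 : ser1 := fun _ => 1.

Definition ser2 := nat -> nat -> rat.

Definition mul2 (F G : ser2) : ser2 :=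
  fun k l => \sum_(i < k.+1) \sum_(j < l.+1) F i j * G (k - i)%N (l - j)%N.

Definition in_x (F : ser1) : ser2 := fun k l => if l == 0%N then F k else 0.
Definition in_y (F : ser1) : ser2 := fun k l => if k == 0%N then F l else 0.

Definition geom_xy : ser2 := fun k l => if k == l then 1 else 0.

Definition fser (N : nat) : ser2 :=
  mul2 geom_xy
    (mul2 (in_x (mul1 one_minus_x (binser N (- (N%:R)^-1))))
          (in_y (mul1 geom1 (binser N ((N%:R)^-1))))).

From HB Require Import structures.
From mathcomp Require Import all_boot all_order all_algebra.
From mathcomp Require Import ring zify.

Import Order.TTheory GRing.Theory Num.Theory.
Local Open Scope ring_scope.

(* Let A = alpha_1, so that alpha_n = A^n and alpha_(-n) = (A^T)^n, and let
   F(x) = sum_(0 < n <= M, N does not divide n) x^n / n.  The two exponents of W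
   are F(A) and -F(A^T), and since A^(M+1) = 0, W = E_-(A^T) E_+(A) where E_+ and
   E_- are the exponential series of F and -F truncated at degree M.  Its entry
   (k, l) is sum_p [x^(k-p)] E_- * [x^(l-p)] E_+, the coefficient of x^k y^l in
   E_-(x) E_+(y) / (1 - x y).
   Formally F = - log (1 - x) + log (1 - x^N) / N, so E_+ = (1 - x^N)^(1/N) / (1 - x)
   and E_- = (1 - x) (1 - x^N)^(-1/N) up to degree M.  This is proved by comparing
   logarithmic derivatives modulo x^M: both sides have constant term 1 and satisfy
   (1 - x) (1 - x^N) E' = +-(1 - x^(N-1)) E, and a first-order linear ODE with a
   given initial value has only one solution modulo x^(M+1). *)

Lemma mul1B_sumX (R : pzRingType) (x : R) n :
  (1 - x) * \sum_(i < n) x ^+ i = 1 - x ^+ n.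
Proof. by rewrite -opprB mulNr -subrX1 opprB. Qed.

Section TruncatedExponential.

Context {R : numFieldType}.
Implicit Types (p q u P E H : {poly R}) (n m : nat).

Lemma dvdp_XnP n p : reflect (forall m, (m < n)%N -> p`_m = 0) ('X^n %| p).
Proof.
apply: (iffP idP) => [/dvdpP[q ->] m ltmn | p_low]; first by rewrite coefMXn ltmn.
have take0 : take_poly n p = 0.
  by apply/polyP => i; rewrite coef_take_poly coef0; case: ifP => // /p_low.
by rewrite -(poly_take_drop n p) take0 add0r dvdp_mull.
Qed.

Lemma dvdp_Xn_cancell n u p : u`_0 != 0 -> ('X^n %| u * p) = ('X^n %| p).
Proof.
move=> u0; apply: Gauss_dvdpr; apply: coprimep_expl.
by rewrite coprimep_sym coprimepX /root horner_coef0.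
Qed.

(* [u E' = P E] modulo [X^n] says that [E] has logarithmic derivative [P / u]. *)
Lemma dvdp_Xn_logderivM {n u1 u2 P1 P2 E1 E2} :
  'X^n %| u1 * E1^`() - P1 * E1 -> 'X^n %| u2 * E2^`() - P2 * E2 ->
  'X^n %| (u1 * u2) * (E1 * E2)^`() - (u2 * P1 + u1 * P2) * (E1 * E2).
Proof.
move=> dv1 dv2.
have -> : (u1 * u2) * (E1 * E2)^`() - (u2 * P1 + u1 * P2) * (E1 * E2)
    = u2 * E2 * (u1 * E1^`() - P1 * E1) + u1 * E1 * (u2 * E2^`() - P2 * E2).
  by rewrite derivM; ring.
by rewrite dvdp_add ?dvdp_mull.
Qed.

Lemma linear_ode_coef_uniq n u P E H : u`_0 != 0 ->
    'X^n %| u * (E^`() - P * E) -> 'X^n %| u * (H^`() - P * H) -> E`_0 = H`_0 ->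
  forall m, (m <= n)%N -> E`_m = H`_m.
Proof.
move=> u0; rewrite !dvdp_Xn_cancell // => dvE dvH EH0.
have /dvdp_XnP dvD : 'X^n %| (E - H)^`() - P * (E - H).
  have -> : (E - H)^`() - P * (E - H) = (E^`() - P * E) - (H^`() - P * H).
    by rewrite derivB; ring.
  exact: dvdp_sub.
suff D0 m : (m <= n)%N -> (E - H)`_m = 0.
  by move=> m /D0 /eqP; rewrite coefB subr_eq0 => /eqP.
elim/ltn_ind: m => -[_ _|m IHm ltmn]; first by rewrite coefB EH0 subrr.
have := dvD m ltmn; rewrite coefB coef_deriv coefM big1 => [|i _]; last first.
  by rewrite IHm ?mulr0 //; have := ltn_ord i; lia.
by rewrite subr0 => /eqP; rewrite mulrn_eq0 /= => /eqP.
Qed.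

Definition exp_trunc n q : {poly R} := \sum_(j < n.+1) (j`!%:R)^-1 *: q ^+ j.

Lemma coef0_exp_trunc n q : q`_0 = 0 -> (exp_trunc n q)`_0 = 1.
Proof.
move=> q0; rewrite /exp_trunc coef_sum big_ord_recl big1 => [|j _].
  by rewrite coefZ expr0 coef1 invr1 mul1r addr0.
by rewrite coefZ exprS coef0M q0 mul0r mulr0.
Qed.

Lemma deriv_exp_trunc n q : q`_0 = 0 ->
  'X^n %| (exp_trunc n q)^`() - q^`() * exp_trunc n q.
Proof.
move=> q0.
have -> : (exp_trunc n q)^`() = q^`() * \sum_(j < n) (j`!%:R)^-1 *: q ^+ j.
  rewrite /exp_trunc linear_sum big_ord_recl /= derivZ deriv_exp mulr0n.
  rewrite scaler0 add0r mulr_sumr; apply: eq_bigr => j _.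
  rewrite derivZ deriv_exp /= -scaler_nat -scalerAr scalerA factS natrM invfM.
  by rewrite mulrAC mulVf ?mul1r // pnatr_eq0.
rewrite /exp_trunc big_ord_recr /= mulrDr opprD addrA subrr add0r.
have Xq : 'X %| q by rewrite -['X]expr1; apply/dvdp_XnP => -[].
by rewrite -sub0r dvdp_sub ?dvdp0 // -mul_polyC !dvdp_mull // dvdp_exp2r.
Qed.

End TruncatedExponential.

Definition ser_poly M (f : ser1) : {poly rat} := \poly_(i < M.+1) f i.

Lemma coef_ser_poly M f i : (i <= M)%N -> (ser_poly M f)`_i = f i.
Proof. by rewrite coef_poly ltnS => ->. Qed.

Lemma coefM_mul1 M (p q : {poly rat}) (f g : ser1) m :
    (forall i, (i <= M)%N -> p`_i = f i) -> (forall i, (i <= M)%N -> q`_i = g i) ->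
  (m <= M)%N -> (p * q)`_m = mul1 f g m.
Proof.
move=> pf qg lemM; rewrite coefM; apply: eq_bigr => i _.
by rewrite pf ?qg //; have := ltn_ord i; lia.
Qed.

Lemma coef_one_minus_X i : (1 - 'X : {poly rat})`_i = one_minus_x i.
Proof.
by rewrite coefB coef1 coefX /one_minus_x; case: i => [|[|i]]; rewrite ?subr0 ?sub0r.
Qed.

Lemma geom_poly_logderiv M :
  'X^M %| (1 - 'X) * (ser_poly M geom1)^`() - 1 * ser_poly M geom1.
Proof.
have geomE : (1 - 'X) * ser_poly M geom1 = 1 - 'X^(M.+1).
  rewrite /ser_poly poly_def (eq_bigr (fun i : 'I_M.+1 => 'X^i)) => [|i _]; last first.
    exact: scale1r.
  exact: mul1B_sumX.
have := congr1 deriv geomE; rewrite derivM derivB derivC derivX derivB derivC derivXn.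
rewrite !sub0r mulN1r => dgeom.
have -> : (1 - 'X) * (ser_poly M geom1)^`() - 1 * ser_poly M geom1
    = - ('X^M *+ M.+1 : {poly rat}).
  by rewrite -dgeom mul1r addrC.
by rewrite -sub0r dvdp_sub ?dvdp0 // -mulr_natl dvdp_mull.
Qed.

Lemma gbinomS a j : gbinom a j.+1 * j.+1%:R = gbinom a j * (a - j%:R).
Proof.
rewrite /gbinom big_ord_recr /= factS natrM invfM.
by field; rewrite pnatr_eq0 -lt0n fact_gt0 [1 + _]addrC natr1 pnatr_eq0.
Qed.

Lemma binser0 N a : binser N a 0 = 1.
Proof. by rewrite /binser dvdn0 div0n expr0 mulr1 /gbinom big_ord0 divr1. Qed.

Lemma binser_small N a j : (0 < j < N)%N -> binser N a j = 0.
Proof.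
move=> /andP[j0 ltjN]; rewrite /binser; case: ifP => // /(dvdn_leq j0).
by rewrite leqNgt ltjN.
Qed.

(* Coefficientwise form of [(1 - x^N) B' = - a N x^(N-1) B] for [B = (1 - x^N)^a]. *)
Lemma binser_rec N a j : (0 < N)%N ->
  binser N a (j + N)%N *+ (j + N)%N - binser N a j *+ j + a * N%:R * binser N a j = 0.
Proof.
move=> N0; rewrite /binser dvdn_addl ?dvdnn //.
case: ifP => [/dvdnP[q ->]|_]; last by rewrite !mul0rn !mulr0 subrr.
have -> : (q * N + N = q.+1 * N)%N by rewrite mulSn addnC.
rewrite !mulnK // exprS -[_ *+ (q.+1 * N)]mulr_natr -[_ *+ (q * N)]mulr_natr !natrM.
transitivity ((-1) ^+ q * N%:R *
  (- (gbinom a q.+1 * q.+1%:R) - gbinom a q * q%:R + a * gbinom a q)); first by ring.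
by rewrite gbinomS; ring.
Qed.

Lemma binser_poly_logderiv N M a : (0 < N)%N ->
  'X^M %| (1 - 'X^N) * (ser_poly M (binser N a))^`()
          - (- (a * N%:R) *: 'X^(N.-1)) * ser_poly M (binser N a).
Proof.
case: N => [//|N] _; apply/dvdp_XnP => m ltmM.
rewrite scaleNr mulNr opprK -scalerAl mulrBl mul1r coefD coefB coefZ !coefXnM !coef_deriv.
rewrite !coef_poly /= !ltnS ltmM (_ : m - N <= M)%N; last by lia.
have [ltmN|lenm] := ltnP m N.
  by rewrite (ltnW ltmN) binser_small ?mul0rn ?subr0 ?mulr0 ?addr0.
have := binser_rec N.+1 a (m - N) (ltn0Sn _).
rewrite (_ : m - N + N.+1 = m.+1)%N; last by lia.
have [lemN|ltNm] := leqP m N.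
  by have -> : (m - N = 0)%N by lia.
have -> : (m - N.+1 < M)%N by lia.
by have -> : (m - N.+1).+1 = (m - N)%N by lia.
Qed.

Definition logpoly N M : {poly rat} :=
  \sum_(1 <= n < M.+1 | ~~ (N %| n)%N) (n%:R)^-1 *: 'X^n.

Lemma coef_logpoly N M i :
  (logpoly N M)`_i = if (0 < i <= M)%N && ~~ (N %| i)%N then i%:R^-1 else 0.
Proof.
rewrite /logpoly coef_sum (eq_bigr (fun n => if n == i then n%:R^-1 else 0)).
  by rewrite -big_mkcondr big_nat1_cond_eq ltnS.
by move=> n _; rewrite coefZ coefXn eq_sym; case: eqP; rewrite ?mulr1 ?mulr0.
Qed.

Lemma coef_deriv_logpoly N M m : (m < M)%N ->
  ((logpoly N M)^`())`_m = if (N %| m.+1)%N then 0 else 1.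
Proof.
move=> ltmM; rewrite coef_deriv coef_logpoly ltmM /=.
by case: (N %| m.+1)%N; rewrite ?mul0rn // -[LHS]mulr_natr mulVf ?pnatr_eq0.
Qed.

Lemma deriv_logpoly_geom N M : (0 < N)%N ->
  'X^M %| (1 - 'X^N) * (logpoly N M)^`() - \sum_(i < N.-1) 'X^i.
Proof.
move=> N0; apply/dvdp_XnP => m ltmM.
have geom_coef : (\sum_(i < N.-1) 'X^i : {poly rat})`_m = (m < N.-1)%N%:R.
  rewrite coef_sum (eq_bigr (fun i : 'I_N.-1 => if i == m :> nat then 1 else 0)).
    by rewrite -big_mkcond (big_ord1_eq _ (fun=> 1)); case: ifP.
  by move=> i _; rewrite coefXn eq_sym; case: (_ == _).
rewrite mulrBl mul1r !coefB coefXnM geom_coef coef_deriv_logpoly //.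
have [ltmN|lenm] := ltnP m N.
  rewrite subr0; have [ltmN1|leN1m] := ltnP m N.-1.
    rewrite ifF ?subrr //; apply/negP => /(dvdn_leq (ltn0Sn m)); lia.
  have -> : m.+1 = N by lia.
  by rewrite dvdnn subrr.
rewrite coef_deriv_logpoly; last by lia.
rewrite (_ : (m < N.-1)%N = false); last by lia.
have -> : m.+1 = ((m - N).+1 + N)%N by lia.
by rewrite dvdn_addl ?dvdnn // subrr subr0.
Qed.

Lemma deriv_logpoly N M : (0 < N)%N ->
  'X^M %| (1 - 'X) * (1 - 'X^N) * (logpoly N M)^`() - (1 - 'X^(N.-1)).
Proof.
move=> N0.
have -> : (1 - 'X) * (1 - 'X^N) * (logpoly N M)^`() - (1 - 'X^(N.-1))
    = (1 - 'X) * ((1 - 'X^N) * (logpoly N M)^`() - \sum_(i < N.-1) 'X^i).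
  by rewrite [RHS]mulrBr mul1B_sumX mulrA.
exact/dvdp_mull/deriv_logpoly_geom.
Qed.

Lemma coef_exp_scale_logpoly N M (c : rat) (H : {poly rat}) : (0 < N)%N -> H`_0 = 1 ->
    'X^M %| (1 - 'X) * (1 - 'X^N) * H^`() - (c *: (1 - 'X^(N.-1))) * H ->
  forall m, (m <= M)%N -> (exp_trunc M (c *: logpoly N M))`_m = H`_m.
Proof.
move=> N0 H0 dvH; set u := (1 - 'X) * (1 - 'X^N) : {poly rat}.
have u0 : u`_0 != 0.
  by rewrite coef0M !coefB coef1 coefX coefXn [(0 == N)%N]eq_sym (gtn_eqF N0).
have F0 : (c *: logpoly N M)`_0 = 0 by rewrite coefZ coef_logpoly mulr0.
apply: (@linear_ode_coef_uniq _ M u ((c *: logpoly N M)^`())) => //.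
- exact/dvdp_mull/deriv_exp_trunc.
- have -> : u * (H^`() - (c *: logpoly N M)^`() * H) =
      (u * H^`() - (c *: (1 - 'X^(N.-1))) * H)
      - c%:P * (u * (logpoly N M)^`() - (1 - 'X^(N.-1))) * H.
    by rewrite derivZ -!mul_polyC; ring.
  by rewrite dvdp_sub // -mulrA dvdp_mull // dvdp_mulr // deriv_logpoly.
by rewrite coef0_exp_trunc.
Qed.

Lemma coef_exp_logpoly N M m : (0 < N)%N -> (m <= M)%N ->
  (exp_trunc M (logpoly N M))`_m = mul1 geom1 (binser N N%:R^-1) m.
Proof.
move=> N0 lemM; rewrite -[logpoly N M]scale1r.
rewrite (@coef_exp_scale_logpoly N M 1
  (ser_poly M geom1 * ser_poly M (binser N N%:R^-1))) //.
- by apply: (@coefM_mul1 M) => // i; apply: coef_ser_poly.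
- by rewrite coef0M !coef_ser_poly // binser0 mulr1.
have := dvdp_Xn_logderivM (geom_poly_logderiv M) (binser_poly_logderiv _ M N%:R^-1 N0).
suff -> : (1 - 'X^N) * 1 + (1 - 'X) * (- (N%:R^-1 * N%:R) *: 'X^(N.-1))
    = 1 *: (1 - 'X^(N.-1)) :> {poly rat} by [].
rewrite mulVf ?pnatr_eq0 -?lt0n // !scale1r.
by case: N N0 => // N _; rewrite exprS scaleN1r; ring.
Qed.

Lemma coef_exp_opp_logpoly N M m : (0 < N)%N -> (m <= M)%N ->
  (exp_trunc M (- logpoly N M))`_m = mul1 one_minus_x (binser N (- N%:R^-1)) m.
Proof.
move=> N0 lemM; rewrite -scaleN1r.
rewrite (@coef_exp_scale_logpoly N M (-1)
  ((1 - 'X) * ser_poly M (binser N (- N%:R^-1)))) //.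
- by apply: (@coefM_mul1 M) => // i; [rewrite coef_one_minus_X | apply: coef_ser_poly].
- by rewrite coef0M coef_one_minus_X coef_ser_poly // binser0 mulr1.
have dvX : 'X^M %| (1 - 'X) * (1 - 'X)^`() - (-1) * (1 - 'X : {poly rat}).
  by rewrite derivB derivC derivX sub0r mulrN1 mulN1r subrr dvdp0.
have := dvdp_Xn_logderivM dvX (binser_poly_logderiv _ M (- N%:R^-1) N0).
suff -> : (1 - 'X^N) * -1 + (1 - 'X) * (- (- N%:R^-1 * N%:R) *: 'X^(N.-1))
    = -1 *: (1 - 'X^(N.-1)) :> {poly rat} by [].
rewrite mulNr mulVf ?pnatr_eq0 -?lt0n // opprK scale1r scaleN1r.
by case: N N0 => // N _; rewrite exprS /=; ring.
Qed.

Lemma alpha_exp M i : alpha M 1 ^+ i = alpha M i.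
Proof.
elim: i => [|i IHi]; apply/matrixP => r c; first by rewrite expr0 !mxE addn0.
rewrite exprSr -mulmxE IHi !mxE.
under eq_bigr => k _ do rewrite !mxE eq_sym mulr_natl mulrb.
rewrite -big_mkcond (big_ord1_eq _ (fun k => ((k + 1)%N == c)%:R)) addn1 addnS.
case: ltnP => // leMri.
by rewrite gtn_eqF //; have := ltn_ord c; lia.
Qed.

Lemma horner_mx_coef (R : comNzRingType) n (B : 'M[R]_n.+1) p :
  horner_mx B p = \sum_(i < size p) p`_i *: B ^+ i.
Proof.
rewrite -{1}[p]coefK poly_def rmorph_sum; apply: eq_bigr => i _.
by rewrite -mul_polyC rmorphM /= horner_mx_C rmorphXn /= horner_mx_X -mulmxE mul_scalar_mx.
Qed.

Lemma horner_mx_trmx (R : comNzRingType) n (B : 'M[R]_n.+1) p :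
  horner_mx B^T p = (horner_mx B p)^T.
Proof.
have trmxX i : B^T ^+ i = (B ^+ i)^T.
  by elim: i => [|i IHi]; rewrite ?trmx1 // exprS IHi exprSr -!mulmxE trmx_mul.
rewrite !horner_mx_coef linear_sum; apply: eq_bigr => i _.
by rewrite trmxX linearZ.
Qed.

Lemma horner_mx_alpha M (p : {poly rat}) (r c : 'I_M.+1) :
  horner_mx (alpha M 1) p r c = if (r <= c)%N then p`_(c - r) else 0.
Proof.
rewrite horner_mx_coef summxE.
under eq_bigr => i _ do rewrite mxE alpha_exp mxE mulr_natr mulrb.
case: leqP => [lerc|ltcr].
  under eq_bigr => i _ do rewrite -(subnKC lerc) eqn_add2l.
  by rewrite -big_mkcond big_ord1_eq; case: ltnP => // /(nth_default 0) ->.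
by rewrite big1 // => i _; rewrite ifF //; apply/negbTE/eqP; lia.
Qed.

Lemma Splus_horner N M : Splus N M = horner_mx (alpha M 1) (logpoly N M).
Proof.
rewrite /Splus /logpoly rmorph_sum; apply: eq_bigr => n _.
by rewrite /= horner_mxZ rmorphXn /= horner_mx_X alpha_exp.
Qed.

Lemma Sminus_horner N M : Sminus N M = horner_mx (alpham M 1) (- logpoly N M).
Proof.
rewrite /alpham horner_mx_trmx rmorphN /= -Splus_horner /Sminus /Splus.
rewrite linearN linear_sum -sumrN; apply: eq_bigr => n _.
by rewrite linearZ /= invrN scaleNr.
Qed.

Lemma nilexp_horner M (B : 'M[rat]_M.+1) q :
  nilexp (horner_mx B q) = horner_mx B (exp_trunc M q).
Proof.
rewrite /nilexp /exp_trunc rmorph_sum; apply: eq_bigr => j _.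
by rewrite /= horner_mxZ rmorphXn.
Qed.

Lemma mul2_in_xy (X Y : ser1) a b : mul2 (in_x X) (in_y Y) a b = X a * Y b.
Proof.
rewrite /mul2 big_ord_recr /= big1 ?add0r => [|i _]; last first.
  by rewrite big1 // => j _; rewrite /in_y subn_eq0 leqNgt ltn_ord mulr0.
rewrite big_ord_recl /= /in_x /in_y subnn subn0 /= big1 ?addr0 // => j _.
by rewrite mul0r.
Qed.

Lemma mul2_geom_xy (X Y : ser1) k l n : (k < n)%N ->
  mul2 geom_xy (mul2 (in_x X) (in_y Y)) k l =
  \sum_(i < n) (if ((i <= k) && (i <= l))%N then X (k - i)%N * Y (l - i)%N else 0).
Proof.
move=> ltkn; rewrite {1}/mul2 (big_ord_widen n (fun i =>
  \sum_(j < l.+1) geom_xy i j * mul2 (in_x X) (in_y Y) (k - i)%N (l - j)%N) ltkn).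
rewrite big_mkcond; apply: eq_bigr => i _.
under eq_bigr => j _ do
  rewrite mul2_in_xy /geom_xy eq_sym (fun_if (fun c => c * _)) mul1r mul0r.
rewrite -big_mkcond (big_ord1_eq _ (fun j => X (k - i)%N * Y (l - j)%N)) !ltnS.
by case: (i <= k)%N; case: (i <= l)%N.
Qed.

Theorem mainTheorem6 (N M : nat) (hN : (2 <= N)%N) (k l : 'I_M.+1) :
  frakW N M k l = fser N k l.
Proof.
have N0 : (0 < N)%N by apply: ltnW.
rewrite /frakW Splus_horner Sminus_horner !nilexp_horner mxE /fser.
rewrite (mul2_geom_xy _ _ _ _ _ (ltn_ord k)); apply: eq_bigr => p _.
rewrite /alpham horner_mx_trmx mxE !horner_mx_alpha.
case: (leqP p k) => [lepk|_]; last by rewrite mul0r.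
case: (leqP p l) => [lepl|_]; last by rewrite mulr0 andbF.
rewrite coef_exp_opp_logpoly ?coef_exp_logpoly //.
all: by rewrite -ltnS (leq_ltn_trans (leq_subr _ _)).
Qed.
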